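(* Let $n\ge2$ and let $g_{nk}(y)=\sum_{p=0}^\infty y^{k+pn}/(k+pn)!$ for $k=0,\dots,n-1$. Then for every real $y$, $$\sum_{k=0}^{n-1}g_{nk}^2(y)=\frac{1}{n}\sum_{l=0}^{n-1}\exp\!\Big[2y\cos\Big(\frac{2\pi l}{n}\Big)\Big].$$ *)

From Stdlib Require Import Reals Factorial.
From Coquelicot Require Import Coquelicot.
Open Scope R_scope.

Definition g (n k : nat) (y : R) : R :=
  Series (fun p : nat => y ^ (k + p * n) / INR (fact (k + p * n))).

From Stdlib Require Import Reals Lia ZArith Lra.
From Coquelicot Require Import Coquelicot.
Open Scope R_scope.

(* Both sides are entire power series in y, so it suffices to compare coefficients.
   The series g_{nk} has j-th coefficient 1/j! when j = k (mod n) and 0 otherwise, so the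
   N-th coefficient of sum_k g_{nk}^2 is the sum of 1/(a! (N-a)!) over the a <= N with
   a = N - a (mod n).  On the other side (2 cos t)^N = sum_a C(N,a) cos((2a - N) t), and
   averaging cos(m 2 pi l / n) over l < n gives 1 if n divides m and 0 otherwise (a
   Dirichlet-kernel computation); the condition n | 2a - N is exactly a = N - a (mod n). *)

Lemma sum_f_R0_swap (f : nat -> nat -> R) m p :
  sum_f_R0 (fun i => sum_f_R0 (fun j => f i j) p) m =
  sum_f_R0 (fun j => sum_f_R0 (fun i => f i j) m) p.
Proof.
  induction m as [|m IHm]; [reflexivity|].
  simpl; rewrite IHm, <- plus_sum; reflexivity.
Qed.

Lemma sum_f_R0_indicator (u : nat -> R) x m : (x <= m)%nat ->
  sum_f_R0 (fun k => if Nat.eqb x k then u k else 0) m = u x.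
Proof.
  induction m as [|m IHm]; intro Hx.
  - replace x with 0%nat by lia; reflexivity.
  - rewrite tech5. destruct (Nat.eqb_spec x (S m)) as [->|Hne].
    + rewrite sum_eq_R0; [ring|].
      intros k Hk; destruct (Nat.eqb_spec (S m) k); [lia|reflexivity].
    + rewrite IHm by lia; ring.
Qed.

Lemma sum_f_R0_zero_before (a : nat -> R) m :
  (forall i, (i < m)%nat -> a i = 0) -> sum_f_R0 a m = a m.
Proof.
  induction m as [|m IHm]; intro Ha; [reflexivity|].
  rewrite tech5, IHm, Ha by auto with arith; ring.
Qed.

Lemma sum_f_R0_zero_after (a : nat -> R) m r :
  (forall i, (m < i <= m + r)%nat -> a i = 0) -> sum_f_R0 a (m + r) = sum_f_R0 a m.
Proof.
  induction r as [|r IHr]; intro Ha.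
  - now rewrite Nat.add_0_r.
  - rewrite Nat.add_succ_r, tech5, IHr, (Ha (S (m + r))); [ring|lia|].
    intros i Hi; apply Ha; lia.
Qed.

Lemma pow_div_fact_le_exp r j : 0 <= r -> r ^ j / INR (fact j) <= exp r.
Proof.
  intro Hr. eapply Rle_trans; [|apply (exp_ge_taylor r j Hr)].
  destruct j as [|j]; [simpl; lra|].
  rewrite tech5.
  enough (0 <= sum_f_R0 (fun i => r ^ i / INR (fact i)) j) by lra.
  apply cond_pos_sum; intro i.
  apply Rmult_le_pos; [now apply pow_le | left; apply Rinv_0_lt_compat, INR_fact_lt_0].
Qed.

Lemma CV_radius_infinite_of_inv_fact_bound (a : nat -> R) :
  (forall j, Rabs (a j) <= / INR (fact j)) -> CV_radius a = p_infty.
Proof.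
  intro Ha.
  assert (Hle : forall r, 0 <= r -> Rbar_le r (CV_radius a)).
  { intros r Hr. apply (proj1 (CV_radius_bounded a)). exists (exp r). intro j.
    rewrite Rabs_mult, <- RPow_abs, (Rabs_right r) by lra.
    eapply Rle_trans; [|apply (pow_div_fact_le_exp r j Hr)].
    rewrite Rmult_comm; apply Rmult_le_compat_l; [now apply pow_le | apply Ha]. }
  destruct (CV_radius a) as [L| |] eqn:E; [|reflexivity|].
  - specialize (Hle (Rabs L + 1)); simpl in Hle.
    pose proof (Rle_abs L); pose proof (Rabs_pos L); lra.
  - specialize (Hle 0 (Rle_refl 0)); contradiction.
Qed.

Section ArithmeticProgression.

Variables (a : nat -> R) (n k : nat).
Hypothesis Hkn : (k < n)%nat.
Hypothesis Ha : forall j, (j mod n <> k)%nat -> a j = 0.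

Lemma sum_f_R0_arith_progression p :
  sum_f_R0 a (k + p * n) = sum_f_R0 (fun q => a (k + q * n)%nat) p.
Proof.
  assert (Hmod : forall i, (i mod n = k)%nat -> exists q, i = (k + q * n)%nat).
  { intros i Hi. exists (i / n)%nat. rewrite (Nat.div_mod_eq i n) at 1. lia. }
  induction p as [|p IHp].
  - simpl; rewrite Nat.add_0_r. apply sum_f_R0_zero_before.
    intros i Hi. apply Ha. rewrite Nat.mod_small; lia.
  - replace (k + S p * n)%nat with (S (k + p * n + (n - 1))) by lia.
    rewrite tech5, sum_f_R0_zero_after, IHp, tech5.
    + do 2 f_equal. lia.
    + intros i Hi. apply Ha. intro Hi'. destruct (Hmod i Hi') as [q ->].
      destruct (Nat.le_gt_cases q p) as [Hq|Hq].
      * pose proof (Nat.mul_le_mono_r _ _ n Hq); lia.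
      * pose proof (Nat.mul_le_mono_r _ _ n Hq); simpl in *; lia.
Qed.

Lemma is_series_arith_progression L :
  is_series a L -> is_series (fun p => a (k + p * n)%nat) L.
Proof.
  intro HL. unfold is_series in *.
  apply (filterlim_ext (fun p => sum_n a (k + p * n))).
  { intro p. rewrite !sum_n_Reals. apply sum_f_R0_arith_progression. }
  apply (filterlim_comp _ _ _ (fun p => (k + p * n)%nat) (sum_n a) _ eventually); [|exact HL].
  apply eventually_subseq. intro p. nia.
Qed.

End ArithmeticProgression.

Definition g_coef (n k j : nat) : R :=
  if Nat.eqb (j mod n) k then / INR (fact j) else 0.

Lemma Rabs_g_coef_le n k j : Rabs (g_coef n k j) <= / INR (fact j).
Proof.
  assert (0 < / INR (fact j)) by apply Rinv_0_lt_compat, INR_fact_lt_0.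
  unfold g_coef; destruct (Nat.eqb _ _).
  - rewrite Rabs_right; lra.
  - rewrite Rabs_R0; lra.
Qed.

Lemma CV_radius_g_coef n k : CV_radius (g_coef n k) = p_infty.
Proof. apply CV_radius_infinite_of_inv_fact_bound, Rabs_g_coef_le. Qed.

Lemma is_pseries_g n k (y : R) : (k < n)%nat -> is_pseries (g_coef n k) y (g n k y).
Proof.
  intro Hk.
  assert (Hex : ex_pseries (g_coef n k) y).
  { apply CV_radius_inside. rewrite CV_radius_g_coef. exact I. }
  assert (Hsupp : forall j, (j mod n <> k)%nat -> g_coef n k j * y ^ j = 0).
  { intros j Hj. unfold g_coef. destruct (Nat.eqb_spec (j mod n) k); [contradiction|ring]. }
  pose proof (PSeries_correct _ _ Hex) as HL.
  replace (g n k y) with (PSeries (g_coef n k) y); [exact HL|].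
  unfold g. symmetry. apply is_series_unique.
  apply is_pseries_R, (is_series_arith_progression _ n k Hk Hsupp) in HL.
  revert HL. apply is_series_ext. intro p.
  unfold g_coef. rewrite Nat.Div0.mod_add, Nat.mod_small, Nat.eqb_refl by lia.
  apply Rmult_comm.
Qed.

Lemma is_pseries_sum_f_R0 (c : nat -> nat -> R) (L : nat -> R) x m :
  (forall k, (k <= m)%nat -> is_pseries (c k) x (L k)) ->
  is_pseries (fun j => sum_f_R0 (fun k => c k j) m) x (sum_f_R0 L m).
Proof.
  induction m as [|m IHm]; intro H; [apply H; lia|].
  exact (is_pseries_plus _ _ _ _ _ (IHm (fun k Hk => H k ltac:(lia))) (H (S m) ltac:(lia))).
Qed.

Lemma is_pseries_exp_mul (c y : R) :
  is_pseries (fun j => c ^ j / INR (fact j)) y (exp (c * y)).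
Proof.
  apply is_pseries_R. generalize (proj1 (is_pseries_R _ _ _) (is_exp_Reals (c * y))).
  apply is_series_ext. intro j. rewrite Rpow_mult_distr. unfold Rdiv.
  (* the equation lives in the carrier of [R_NormedModule], which [ring] does not recognise *)
  lazymatch goal with |- ?u = ?v => change (u = v :> R) end. ring.
Qed.

Lemma sin_IZR_mul_2PI (z : Z) : sin (2 * (IZR z * PI)) = 0.
Proof. rewrite sin_2a, sin_eq_0_1 by eauto; ring. Qed.

Lemma cos_IZR_mul_2PI (z : Z) : cos (2 * (IZR z * PI)) = 1.
Proof. rewrite cos_2a_sin, sin_eq_0_1 by eauto; ring. Qed.

Lemma sin_half_mul_sum_cos x m :
  2 * sin (x / 2) * sum_f_R0 (fun l => cos (INR l * x)) m =
  sin ((INR m + / 2) * x) + sin (x / 2).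
Proof.
  induction m as [|m IHm].
  - simpl. rewrite Rmult_0_l, cos_0. replace ((0 + / 2) * x) with (x / 2) by field. ring.
  - rewrite tech5, Rmult_plus_distr_l, IHm, S_INR.
    replace ((INR m + 1 + / 2) * x) with ((INR m + 1) * x + x / 2) by field.
    replace ((INR m + / 2) * x) with ((INR m + 1) * x - x / 2) by field.
    rewrite sin_plus, sin_minus. ring.
Qed.

Lemma sum_cos_roots_of_unity (n : nat) (z : Z) : (1 <= n)%nat ->
  sum_f_R0 (fun l => cos (IZR z * (2 * PI * INR l / INR n))) (n - 1) =
  if Z.eqb (z mod Z.of_nat n) 0 then INR n else 0.
Proof.
  intro Hn.
  assert (HnR : INR n <> 0) by (apply not_0_INR; lia).
  assert (HnZ : Z.of_nat n <> 0%Z) by lia.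
  set (x := 2 * PI * IZR z / INR n).
  rewrite (sum_eq _ (fun l => cos (INR l * x))) by (intros; unfold x; f_equal; field; auto).
  destruct (Z.eqb_spec (z mod Z.of_nat n) 0) as [Hdvd|Hndvd].
  - apply Z.div_exact in Hdvd; [|exact HnZ].
    rewrite (sum_eq _ (fun _ => 1)), sum_cte; [rewrite Rmult_1_l; f_equal; lia|].
    intros l _. replace (INR l * x) with (2 * (IZR (Z.of_nat l * (z / Z.of_nat n)) * PI)).
    + apply cos_IZR_mul_2PI.
    + unfold x. rewrite Hdvd at 2. rewrite !mult_IZR, <- !INR_IZR_INZ. field; auto.
  - assert (Hsin : sin (x / 2) <> 0).
    { intro H. apply sin_eq_0_0 in H as [q Hq]. apply Hndvd.
      replace z with (q * Z.of_nat n)%Z; [apply Z.mod_mul, HnZ|].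
      assert (HPI : PI <> 0) by (pose proof PI_RGT_0; lra).
      apply eq_IZR. rewrite mult_IZR, <- INR_IZR_INZ.
      replace (IZR q) with (x / 2 / PI) by (rewrite Hq; field; exact HPI).
      unfold x. field. auto. }
    apply (Rmult_eq_reg_l (2 * sin (x / 2))); [|lra].
    rewrite sin_half_mul_sum_cos, minus_INR by lia.
    replace ((INR n - INR 1 + / 2) * x) with (2 * (IZR z * PI) - x / 2)
      by (unfold x; simpl INR; field; auto).
    rewrite sin_minus, sin_IZR_mul_2PI, cos_IZR_mul_2PI. ring.
Qed.

Lemma binomial_C_0 N : Binomial.C N 0 = 1.
Proof.
  unfold Binomial.C. rewrite Nat.sub_0_r, Rmult_1_l. apply Rdiv_diag, INR_fact_neq_0.
Qed.

Lemma binomial_C_diag N : Binomial.C N N = 1.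
Proof. rewrite pascal_step1, Nat.sub_diag by lia. apply binomial_C_0. Qed.

Lemma binomial_C_div_fact N a : (a <= N)%nat ->
  Binomial.C N a / INR (fact N) = / INR (fact a) * / INR (fact (N - a)).
Proof.
  intro. pose proof (INR_fact_neq_0 N). pose proof (INR_fact_neq_0 a).
  pose proof (INR_fact_neq_0 (N - a)).
  unfold Binomial.C. field. auto.
Qed.

Lemma sum_binomial_pascal (h : nat -> R) N :
  sum_f_R0 (fun a => Binomial.C N a * (h (S a) + h a)) N =
  sum_f_R0 (fun a => Binomial.C (S N) a * h a) (S N).
Proof.
  destruct N as [|N]; [simpl; rewrite !binomial_C_diag, !binomial_C_0; ring|].
  rewrite (decomp_sum _ (S (S N))) by lia; simpl pred.
  rewrite (tech5 (fun i => Binomial.C (S (S N)) (S i) * h (S i))).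
  rewrite (sum_eq _ (fun i => Binomial.C (S N) i * h (S i) + Binomial.C (S N) (S i) * h (S i)) N)
    by (intros i Hi; rewrite <- pascal by lia; ring).
  rewrite (sum_eq _ (fun a => Binomial.C (S N) a * h (S a) + Binomial.C (S N) a * h a) (S N))
    by (intros; ring).
  rewrite !plus_sum, tech5, (decomp_sum (fun a => Binomial.C (S N) a * h a)) by lia; simpl pred.
  rewrite !binomial_C_0, !binomial_C_diag. ring.
Qed.

Lemma two_cos_pow t N :
  (2 * cos t) ^ N = sum_f_R0 (fun a => Binomial.C N a * cos ((2 * INR a - INR N) * t)) N.
Proof.
  induction N as [|N IHN].
  - simpl. rewrite binomial_C_0, Rmult_0_r, Rminus_0_r, Rmult_0_l, cos_0. ring.
  - rewrite <- (sum_binomial_pascal (fun a => cos ((2 * INR a - INR (S N)) * t))).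
    simpl pow. rewrite IHN, scal_sum.
    apply sum_eq. intros a _. rewrite !S_INR.
    replace ((2 * (INR a + 1) - (INR N + 1)) * t) with ((2 * INR a - INR N) * t + t) by ring.
    replace ((2 * INR a - (INR N + 1)) * t) with ((2 * INR a - INR N) * t - t) by ring.
    rewrite cos_plus, cos_minus. ring.
Qed.

Lemma sum_g_coef_mul n a b : (1 <= n)%nat ->
  sum_f_R0 (fun k => g_coef n k a * g_coef n k b) (n - 1) =
  if Nat.eqb (a mod n) (b mod n) then / INR (fact a) * / INR (fact b) else 0.
Proof.
  intro Hn.
  rewrite (sum_eq _ (fun k => if Nat.eqb (a mod n) k then / INR (fact a) * g_coef n k b else 0))
    by (intros k _; unfold g_coef at 1; destruct (Nat.eqb _ k); ring).
  rewrite sum_f_R0_indicator by (pose proof (Nat.mod_upper_bound a n); lia).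
  unfold g_coef. rewrite Nat.eqb_sym. destruct (Nat.eqb _ _); ring.
Qed.

Lemma PS_mult_g_coef_sum n N : (1 <= n)%nat ->
  sum_f_R0 (fun k => PS_mult (g_coef n k) (g_coef n k) N) (n - 1) =
  sum_f_R0 (fun a => if Nat.eqb (a mod n) ((N - a) mod n)
                     then / INR (fact a) * / INR (fact (N - a)) else 0) N.
Proof.
  intro Hn. unfold PS_mult. rewrite sum_f_R0_swap.
  apply sum_eq. intros a _. now apply sum_g_coef_mul.
Qed.

Lemma Zmod_two_mul_sub_eqb n a N : (a <= N)%nat ->
  Z.eqb ((2 * Z.of_nat a - Z.of_nat N) mod Z.of_nat n) 0 = Nat.eqb (a mod n) ((N - a) mod n).
Proof.
  intro HaN.
  replace (2 * Z.of_nat a - Z.of_nat N)%Z with (Z.of_nat a - Z.of_nat (N - a))%Z by lia.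
  apply Bool.eq_iff_eq_true.
  rewrite Z.eqb_eq, Nat.eqb_eq, <- Z.cong_iff_0, <- !Nat2Z.inj_mod.
  split; lia.
Qed.

Lemma mean_two_cos_pow_roots_of_unity n N : (1 <= n)%nat ->
  / INR n * sum_f_R0 (fun l => (2 * cos (2 * PI * INR l / INR n)) ^ N / INR (fact N)) (n - 1) =
  sum_f_R0 (fun a => if Nat.eqb (a mod n) ((N - a) mod n)
                     then / INR (fact a) * / INR (fact (N - a)) else 0) N.
Proof.
  intro Hn. assert (HnR : INR n <> 0) by (apply not_0_INR; lia).
  rewrite (sum_eq _ (fun l => sum_f_R0 (fun a =>
             cos (IZR (2 * Z.of_nat a - Z.of_nat N) * (2 * PI * INR l / INR n)) *
             (Binomial.C N a / INR (fact N))) N)).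
  2:{ intros l _. rewrite two_cos_pow. unfold Rdiv at 1. rewrite Rmult_comm, scal_sum.
      apply sum_eq. intros a _. rewrite minus_IZR, mult_IZR, <- INR_IZR_INZ, <- INR_IZR_INZ.
      unfold Rdiv. ring. }
  rewrite sum_f_R0_swap, scal_sum. apply sum_eq. intros a Ha.
  rewrite <- scal_sum, sum_cos_roots_of_unity, Zmod_two_mul_sub_eqb, binomial_C_div_fact by lia.
  pose proof (INR_fact_neq_0 a); pose proof (INR_fact_neq_0 (N - a)).
  destruct (Nat.eqb _ _); field; auto.
Qed.

Lemma is_pseries_sum_sq_g n (y : R) : (1 <= n)%nat ->
  is_pseries (fun N => sum_f_R0 (fun k => PS_mult (g_coef n k) (g_coef n k) N) (n - 1)) y
    (sum_f_R0 (fun k => g n k y ^ 2) (n - 1)).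
Proof.
  intro Hn. apply is_pseries_sum_f_R0. intros k Hk.
  replace (g n k y ^ 2) with (g n k y * g n k y) by ring.
  apply is_pseries_mult; try (apply is_pseries_g; lia); rewrite CV_radius_g_coef; exact I.
Qed.

Lemma is_pseries_mean_exp_two_cos n (y : R) :
  is_pseries (fun N => / INR n * sum_f_R0
      (fun l => (2 * cos (2 * PI * INR l / INR n)) ^ N / INR (fact N)) (n - 1)) y
    (/ INR n * sum_f_R0 (fun l => exp (2 * y * cos (2 * PI * INR l / INR n))) (n - 1)).
Proof.
  apply (is_pseries_scal (V := R_NormedModule) (/ INR n)); [apply Rmult_comm|].
  apply is_pseries_sum_f_R0. intros l _.
  replace (2 * y * cos (2 * PI * INR l / INR n)) with (2 * cos (2 * PI * INR l / INR n) * y)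
    by ring.
  apply is_pseries_exp_mul.
Qed.

Theorem mainTheorem4 (n : nat) (hn : (2 <= n)%nat) (y : R) :
  sum_f_R0 (fun k => (g n k y) ^ 2) (n - 1) =
  / INR n * sum_f_R0 (fun l => exp (2 * y * cos (2 * PI * INR l / INR n))) (n - 1).
Proof.
  assert (Hn : (1 <= n)%nat) by lia.
  rewrite <- (is_pseries_unique _ _ _ (is_pseries_sum_sq_g n y Hn)).
  rewrite <- (is_pseries_unique _ _ _ (is_pseries_mean_exp_two_cos n y)).
  apply PSeries_ext. intro N.
  rewrite PS_mult_g_coef_sum, mean_two_cos_pow_roots_of_unity by exact Hn.
  reflexivity.
Qed.
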